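(* Let $p>q\geq 2$ be relatively prime integers with $p\geq 2q-1$. For every $d\in A_q$ let $k_d\in A_p$ and $j_d\in A_q$ be the unique elements with $k_dq\equiv d\pmod p$ and $k_dq=j_dp+d$. If $wab\in L(q,p)$ for some word $w$ over $A_{pq}$ and digits $a,b\in A_{pq}$ with $a\equiv k_d\pmod p$, then $b\equiv j_d\pmod q$.
   Context: For an integer $n>1$, $A_n=\{0,1,\dots,n-1\}$. For relatively prime integers $r,s\geq2$ define $g_{r,s}:A_{rs}\times A_{rs}\to A_{rs}$ by writing $x=x_1s+x_0$, $y=y_1s+y_0$ with $x_0,y_0\in A_s$, $x_1,y_1\in A_r$ (uniquely), and $g_{r,s}(x,y)=x_0r+y_1$; and $F_{r,s}:A_{rs}^{\mathbb{Z}}\to A_{rs}^{\mathbb{Z}}$ by $F_{r,s}(c)(i)=g_{r,s}(g_{r,s}(c(i-1),c(i)),g_{r,s}(c(i),c(i+1)))$. $F_{r,s}$ is a bijection with inverse $F_{s,r}$, so $F_{r,s}^n$ is defined for $n\in\mathbb{Z}$. The trace is $\mathrm{tr}_{r,s}(c)=(F_{r,s}^n(c)(1))_{n\in\mathbb{Z}}$, and $L(r,s)$ is the set of all finite words $u(1)\cdots u(m)$ ($m\geq0$) over $A_{rs}$ such that for some $c\in A_{rs}^{\mathbb{Z}}$ and $n_0\in\mathbb{Z}$ we have $u(j)=\mathrm{tr}_{r,s}(c)(n_0+j)$ for $1\leq j\leq m$. Here $L(q,p)$ refers to traces with respect to $F_{q,p}$. *)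

From mathcomp Require Import all_boot all_order all_algebra.
Set Implicit Arguments. Unset Strict Implicit. Unset Printing Implicit Defensive.
Import GRing.Theory Num.Theory.

(* Configurations c : Z -> A_n are functions int -> nat; validity (values < n)
   is imposed separately where needed. *)
Definition config := int -> nat.

Definition valid_config (n : nat) (c : config) : Prop := forall i : int, c i < n.

Definition g (r s : nat) (x y : nat) : nat := (x %% s) * r + y %/ s.

Definition F (r s : nat) (c : config) : config :=
  fun i => g r s (g r s (c (i - 1)%R) (c i)) (g r s (c i) (c (i + 1)%R)).

(* F_{r,s}^n for n in Z, with F_{r,s}^{-1} = F_{s,r}. *)
Definition Fpow (r s : nat) (n : int) (c : config) : config :=
  match n with
  | Posz m => iter m (F r s) c
  | Negz m => iter m.+1 (F s r) c
  end.

Definition tr (r s : nat) (c : config) (n : int) : nat := Fpow r s n c 1%R.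

(* L(r,s): finite words u(1)...u(m) that occur in some trace:
   u(j) = tr_{r,s}(c)(n0 + j) for 1 <= j <= m. Words are 0-indexed seqs. *)
Definition inL (r s : nat) (u : seq nat) : Prop :=
  exists c : config, valid_config (r * s) c /\
  exists n0 : int, forall j : nat, j < size u ->
    nth 0 u j = tr r s c (n0 + (j.+1)%:Z)%R.

(** Two consecutive letters of a trace are [F(c)(1)] and [c(1)] or [c(1)] and
    [F(c)(1)], for a suitable configuration [c] and [F] one of [F_{q,p}],
    [F_{p,q}]. In both cases the residue [j] of the second letter is read off
    from a number of the form [k q + u] with [u < q]: since [k q = j p + d] and
    [d + u < 2q - 1 <= p], its quotient by [p] is [j]. *)
From mathcomp Require Import all_boot all_order all_algebra zify.
Import GRing.Theory.

Set Implicit Arguments.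
Unset Strict Implicit.

Lemma g_mod r s x y : y < r * s -> g r s x y %% r = y %/ s.
Proof.
move=> hy; have s0 : 0 < s by case: s hy => //; rewrite muln0.
by rewrite /g modnMDl modn_small // ltn_divLR.
Qed.

Lemma g_div r s x y : y < r * s -> g r s x y %/ r = x %% s.
Proof.
move=> hy; have s0 : 0 < s by case: s hy => //; rewrite muln0.
have r0 : 0 < r by case: r hy.
by rewrite /g divnMDl // divn_small ?addn0 // ltn_divLR.
Qed.

Lemma g_lt r s x y : y < r * s -> g r s x y < r * s.
Proof.
move=> hy; have s0 : 0 < s by case: s hy => //; rewrite muln0.
have hx : x %% s < s by rewrite ltn_mod.
have hys : y %/ s < r by rewrite ltn_divLR.
rewrite /g; nia.
Qed.

Lemma F_valid r s c : valid_config (r * s) c -> valid_config (r * s) (F r s c).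
Proof. by move=> hc i; apply/g_lt/g_lt. Qed.

Lemma iter_F_valid r s n c :
  valid_config (r * s) c -> valid_config (r * s) (iter n (F r s) c).
Proof. by move=> hc; elim: n => //= n IH; apply: F_valid. Qed.

Lemma F_mod r s c i : valid_config (r * s) c ->
  F r s c i %% r = g r s (c i) (c (i + 1)%R) %/ s.
Proof. by move=> hc; rewrite /F g_mod // g_lt. Qed.

Lemma Fpow_Negz_add1 r s m c : Fpow r s (Negz m + 1)%R c = iter m (F s r) c.
Proof. by case: m => // m; rewrite (_ : (Negz m.+1 + 1)%R = Negz m) //; lia. Qed.

Lemma tr_add1 r s c n : valid_config (r * s) c ->
  exists2 c', valid_config (r * s) c' &
    (tr r s c n = c' 1%R /\ tr r s c (n + 1)%R = F r s c' 1%R) \/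
    (tr r s c n = F s r c' 1%R /\ tr r s c (n + 1)%R = c' 1%R).
Proof.
move=> hc; case: n => m.
- exists (iter m (F r s) c); first exact: iter_F_valid.
  by left; rewrite /tr (_ : (Posz m + 1)%R = Posz m.+1) // -addn1 PoszD.
- exists (iter m (F s r) c); first by rewrite mulnC; apply/iter_F_valid; rewrite mulnC.
  by right; rewrite /tr Fpow_Negz_add1.
Qed.

Lemma inL_last_two r s w a b : inL r s (w ++ [:: a; b]) ->
  exists2 c, valid_config (r * s) c &
    exists n, a = tr r s c n /\ b = tr r s c (n + 1)%R.
Proof.
case=> c [hc [n0 hw]]; exists c => //; exists (n0 + (size w).+1%:Z)%R.
have := hw (size w); have := hw (size w).+1.
rewrite !nth_cat ltnn (ltn_geF (leqnSn (size w).+1)) subSn // subnn /=.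
rewrite size_cat addn2 -addrA -PoszD addn1.
by move=> -> // ->.
Qed.

Section ResidueTransfer.

Variables p q d k j : nat.
Hypotheses (hp : 2 * q - 1 <= p) (hd : d < q) (hkj : k * q = j * p + d).

Lemma divn_kq_add u : u < q -> (k * q + u) %/ p = j.
Proof.
move=> hu; have p0 : 0 < p by lia.
by rewrite hkj -addnA divnMDl // divn_small ?addn0 //; lia.
Qed.

Lemma F_qp_mod c : valid_config (q * p) c -> c 1%R %% p = k -> F q p c 1%R %% q = j.
Proof.
move=> hc hk; have p0 : 0 < p by lia.
rewrite F_mod // /g hk divn_kq_add // ltn_divLR //; exact: hc.
Qed.

Lemma F_pq_mod c : valid_config (p * q) c -> F p q c 1%R %% p = k -> c 1%R %% q = j.
Proof.
move=> hc; rewrite F_mod //; set v := g p q _ _ => hv.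
have hv_lt : c (1 + 1)%R < p * q by apply: hc.
have v_eq : v = k * q + v %% q by rewrite {1}(divn_eq v q) hv.
by rewrite -(g_div (c 1%R) hv_lt) -/v v_eq divn_kq_add // ltn_mod; lia.
Qed.

End ResidueTransfer.

Unset Implicit Arguments.

Theorem lemma5 (p q : nat) (hq : 2 <= q) (hqp : q < p) (hcop : coprime p q)
  (hp : 2 * q - 1 <= p)
  (d k j : nat) (hd : d < q) (hk : k < p) (hj : j < q)
  (hkmod : k * q = d %[mod p]) (hkj : k * q = j * p + d)
  (w : seq nat) (a b : nat)
  (hw : all (fun x => x < p * q) w) (ha : a < p * q) (hb : b < p * q)
  (hL : inL q p (w ++ [:: a; b]))
  (hak : a = k %[mod p]) :
  b = j %[mod q].
Proof.
rewrite (modn_small hj) (modn_small hk) in hak *.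
have [c hc [n [ea eb]]] := inL_last_two hL.
rewrite {}eb; rewrite {}ea in hak.
have [c' hc' [[ea ->] | [ea ->]]] := tr_add1 n hc; rewrite {}ea in hak.
- exact: (F_qp_mod hp hd hkj hc' hak).
- by apply: (F_pq_mod hp hd hkj _ hak); rewrite mulnC.
Qed.
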